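(* Let $\mathcal{A}$ be a Boolean relational structure with finite signature such that $c_0\in\langle\mathcal{A}\rangle$. If an $n$-ary Boolean relation $R\neq\emptyset$ is not 0-valid, then $c_1\in\langle\mathcal{A}\cup\{R\}\rangle_{\leq 1}$.
   Context: Domain $\{0,1\}$; $c_0=\{(0)\}$, $c_1=\{(1)\}$. A Boolean relation is 0-valid if it is invariant under the constant operation $0$ (i.e. for nonempty relations, it contains the all-$0$ tuple). $\langle\mathcal{A}\rangle$ is the set of relations pp-definable over $\mathcal{A}$ (formulas $\exists\bar y\,\bigwedge_i R_i(\mathbf{x}_i)$ with $R_i$ in $\mathcal{A}$ or equality). $\langle\mathcal{A}\cup\{R\}\rangle_{\leq 1}$ is the set of relations pp-definable over $\mathcal{A}\cup\{R\}$ using at most one atom with relation $R$. *)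

From mathcomp Require Import all_boot.
Set Implicit Arguments. Unset Strict Implicit. Unset Printing Implicit Defensive.

(* A Boolean relation: an arity n together with a set of n-tuples over {0,1}
   (false = 0, true = 1). *)
Definition brel : Type := {n : nat & {set n.-tuple bool}}.

Definition mkrel (n : nat) (R : {set n.-tuple bool}) : brel := existT _ n R.

Definition c0 : brel := mkrel [set [tuple false]].
Definition c1 : brel := mkrel [set [tuple true]].

(* 0-valid: invariant under the constant-0 operation, i.e. empty or
   containing the all-0 tuple. *)
Definition zero_valid (r : brel) : Prop :=
  tagged r = set0 \/ nseq_tuple (tag r) false \in tagged r.

Inductive atom (V : nat) : Type :=
| AtomRel (r : brel) (s : (tag r).-tuple 'I_V)
| AtomEq (i j : 'I_V).

Definition atom_in (S : seq brel) V (a : atom V) : bool :=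
  match a with AtomRel r _ => r \in S | AtomEq _ _ => true end.

Definition atom_uses (R : brel) V (a : atom V) : bool :=
  match a with AtomRel r _ => r == R | AtomEq _ _ => false end.

Definition atom_sat V (f : 'I_V -> bool) (a : atom V) : bool :=
  match a with
  | AtomRel r s => map_tuple f s \in tagged r
  | AtomEq i j => f i == f j
  end.

(* r is pp-definable over the relations in S, via a formula
   exists y_1..y_m, /\ atoms, where the free variables x_0..x_{n-1} are
   indices 0..n-1 and the quantified variables are n..n+m-1;
   additionally the list of atoms must satisfy the side condition [ok]. *)
Definition ppdef_with (S : seq brel) (ok : forall V, seq (atom V) -> Prop)
  (r : brel) : Prop :=
  exists (m : nat) (phi : seq (atom (tag r + m))),
    ok _ phi /\ all (@atom_in S _) phi /\
    forall t : (tag r).-tuple bool,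
      t \in tagged r <->
      exists y : m.-tuple bool,
        all (atom_sat (fun i : 'I_(tag r + m) => nth false (t ++ y) i)) phi.

Definition ppdef (S : seq brel) (r : brel) : Prop :=
  ppdef_with S (fun _ _ => True) r.

Definition ppdef_le1 (S : seq brel) (R : brel) (r : brel) : Prop :=
  ppdef_with (R :: S) (fun V phi => count (@atom_uses R V) phi <= 1) r.

From mathcomp Require Import all_boot.

Set Implicit Arguments. Unset Strict Implicit. Unset Printing Implicit Defensive.

(* Let phi be a pp-definition of c_0 over A and a a solution of phi; every
   solution of phi gives the free variable the value 0.  Merge the variables
   on which a is 1 into one variable x and the others into z: the resulting
   formula holds at (x, z) = (1, 0), via a, but not at (0, 1), which
   corresponds to the complement of a.  Pick t0 in R and add the atom R(s),
   where s puts x at the 1-positions of t0 and z at its 0-positions: it holds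
   at (1, 0), fails at (0, 0) since R is not 0-valid, and fails at (0, 1)
   when the complement of t0 is not in R.  Then exists z, R(s) /\ phi(x, z)
   defines c_1.  To use R only once, the atoms of phi over R are dropped.
   Choose t0 with its complement outside R unless R is closed under
   complement; in that case the complement of a still satisfies the dropped
   atoms, so (0, 1) is excluded either way. *)

Definition remap V W (sg : 'I_V -> 'I_W) (b : atom V) : atom W :=
  match b with
  | AtomRel r s => @AtomRel W r (map_tuple sg s)
  | AtomEq i j => AtomEq (sg i) (sg j)
  end.

Lemma atom_sat_remap V W (sg : 'I_V -> 'I_W) (f : 'I_W -> bool) b :
  atom_sat f (remap sg b) = atom_sat (f \o sg) b.
Proof.
case: b => [r s|i j] //=.
suff -> : map_tuple f (map_tuple sg s) = map_tuple (f \o sg) s by [].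
by apply: val_inj; rewrite /= -map_comp.
Qed.

Lemma eq_atom_sat V (f g : 'I_V -> bool) b : f =1 g -> atom_sat f b = atom_sat g b.
Proof.
move=> fg; case: b => [r s|i j] /=; last by rewrite !fg.
suff -> : map_tuple f s = map_tuple g s by [].
by apply: val_inj; apply: eq_map.
Qed.

Lemma atom_uses_remap r V W (sg : 'I_V -> 'I_W) b :
  atom_uses r (remap sg b) = atom_uses r b.
Proof. by case: b. Qed.

Lemma count_uses_remap r V W (sg : 'I_V -> 'I_W) (phi : seq (atom V)) :
  count (@atom_uses r W) (map (remap sg) phi) = count (@atom_uses r V) phi.
Proof. by rewrite count_map; apply: eq_count => b; apply: atom_uses_remap. Qed.

Lemma atom_in_remap S V W (sg : 'I_V -> 'I_W) b :
  atom_in S (remap sg b) = atom_in S b.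
Proof. by case: b. Qed.

Lemma atom_in_cons S r V (b : atom V) : atom_in S b -> atom_in (r :: S) b.
Proof. by case: b => //= r' _ r'S; rewrite inE r'S orbT. Qed.

Definition collapse V (c : 'I_V -> bool) (v : 'I_V) : 'I_2 :=
  if c v then ord0 else ord_max.

Lemma atom_sat_collapse V (c : 'I_V -> bool) (f : 'I_2 -> bool) b :
  atom_sat f (remap (collapse c) b) =
  atom_sat (fun v => if c v then f ord0 else f ord_max) b.
Proof.
by rewrite atom_sat_remap; apply: eq_atom_sat => v; rewrite /= /collapse; case: (c v).
Qed.

Definition negb_closed (r : brel) : bool :=
  [forall t, (t \in tagged r) ==> (map_tuple negb t \in tagged r)].

Lemma atom_sat_negb r V (f : 'I_V -> bool) b :
  negb_closed r -> atom_uses r b -> atom_sat f b -> atom_sat (negb \o f) b.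
Proof.
move=> /forallP r_closed; case: b => //= r' s /eqP r'r; subst r'.
move=> /(implyP (r_closed _)).
suff -> : map_tuple (negb \o f) s = map_tuple negb (map_tuple f s) by [].
by apply: val_inj; rewrite /= map_comp.
Qed.

Lemma all_atom_sat_negb r V (f : 'I_V -> bool) (phi : seq (atom V)) :
  negb_closed r -> all (atom_sat f) phi ->
  all (atom_sat (negb \o f)) [seq b <- phi | ~~ atom_uses r b] ->
  all (atom_sat (negb \o f)) phi.
Proof.
move=> r_closed phi_f; rewrite all_filter => phi_rest.
have := introT andP (conj phi_f phi_rest); rewrite -all_predI; apply: sub_all => b /=.
case/andP=> f_b; case: (boolP (atom_uses r b)) => [uses_r _ | _ /= //].
exact: atom_sat_negb r_closed uses_r f_b.
Qed.

Lemma ppdef_sat_mem (r : brel) m (phi : seq (atom (tag r + m))) :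
  (forall t, t \in tagged r <->
     exists y : m.-tuple bool,
       all (atom_sat (fun i : 'I_(tag r + m) => nth false (t ++ y) i)) phi) ->
  forall f, all (atom_sat f) phi -> [tuple f (lshift m i) | i < tag r] \in tagged r.
Proof.
move=> phi_def f phi_f; apply/phi_def; exists [tuple f (rshift (tag r) j) | j < m].
set y := [tuple f (rshift (tag r) j) | j < m].
set t := [tuple f (lshift m i) | i < tag r].
suff eq_f : (fun i : 'I_(tag r + m) => nth false (t ++ y) i) =1 f.
  by apply: sub_all phi_f => b; rewrite (eq_atom_sat _ eq_f).
move=> i; rewrite nth_cat size_tuple; case: (splitP i) => [j ij|k ik].
- have -> : i = lshift m j by exact: val_inj.
  by rewrite /= (nth_map j) ?size_enum_ord // nth_ord_enum.
- have -> : i = rshift (tag r) k by exact: val_inj.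
  by rewrite /= addKn (nth_map k) ?size_enum_ord // nth_ord_enum.
Qed.

Lemma ppdef_c0_formula S ok : ppdef_with S ok c0 ->
  exists m (phi : seq (atom m.+1)),
    [/\ all (@atom_in S _) phi, exists a, all (atom_sat a) phi
      & forall f, all (atom_sat f) phi -> f ord0 = false].
Proof.
move=> [m [phi [_ [phiS phi_def]]]]; exists m, phi; split=> //.
- have [y phi_y] := proj1 (phi_def [tuple false]) (set11 _).
  by exists (fun i => nth false ([tuple false] ++ y) i).
move=> f /(ppdef_sat_mem phi_def); rewrite in_set1.
move=> /eqP/(congr1 (fun t => tnth t ord0)).
by rewrite tnth_mktuple; congr (f _ = _); apply: val_inj.
Qed.

Lemma ppdef_c1 S ok (phi : seq (atom 2)) :
  ok 2 phi -> all (@atom_in S _) phi ->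
  (forall x : bool,
     x <-> exists z, all (atom_sat (fun i : 'I_2 => nth false [:: x; z] i)) phi) ->
  ppdef_with S ok c1.
Proof.
move=> ok_phi phiS phi_def; exists 1, phi; split=> //; split=> // - [[|x []] //= tP].
rewrite in_set1 -val_eqE /=; split.
- move=> /eqP[->]; have [z phi_z] := proj1 (phi_def true) isT.
  by exists [tuple z].
- move=> [[[|z []] //= zP] phi_z]; suff -> : x by [].
  by apply/phi_def; exists z.
Qed.

Definition full_atom (r : brel) : atom (tag r) := AtomRel (ord_tuple (tag r)).

Section ForcingOne.

Variables (A : seq brel) (n V : nat) (R : {set n.-tuple bool}).
Variables (phi : seq (atom V)) (v0 : 'I_V) (a : 'I_V -> bool) (t0 : n.-tuple bool).

Hypothesis phi_v0 : forall f, all (atom_sat f) phi -> f v0 = false.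
Hypothesis phi_a : all (atom_sat a) phi.
Hypothesis t0R : t0 \in R.
Hypothesis R_not0 : nseq_tuple n false \notin R.
Hypothesis t0_compl : map_tuple negb t0 \in R -> negb_closed (mkrel R).

Definition forcing_one : seq (atom 2) :=
  remap (collapse (tnth t0)) (full_atom (mkrel R))
  :: map (remap (collapse a)) [seq b <- phi | ~~ atom_uses (mkrel R) b].

Let holds x z := all (atom_sat (fun i : 'I_2 => nth false [:: x; z] i)) forcing_one.

Lemma forcing_oneE x z : holds x z =
  ([tuple if tnth t0 i then x else z | i < n] \in R) &&
  all (atom_sat (fun v => if a v then x else z))
      [seq b <- phi | ~~ atom_uses (mkrel R) b].
Proof.
rewrite /holds /= all_map; congr andb.
  congr (_ \in R); apply: eq_from_tnth => i.
  by rewrite !tnth_map tnth_ord_tuple /collapse; case: (tnth t0 i).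
by apply: eq_all => b; rewrite /= atom_sat_collapse.
Qed.

Lemma forcing_one_holds10 : holds true false.
Proof.
rewrite forcing_oneE; apply/andP; split.
  suff -> : [tuple if tnth t0 i then true else false | i < n] = t0 by [].
  by apply: eq_from_tnth => i; rewrite tnth_mktuple; case: (tnth t0 i).
rewrite all_filter; apply: sub_all phi_a => b a_b; apply/implyP => _.
by rewrite (eq_atom_sat _ (g := a)) // => v; case: (a v).
Qed.

Lemma forcing_one_fails0 z : ~~ holds false z.
Proof.
apply/negP; rewrite forcing_oneE => /andP[].
case: z; last first.
  suff -> : [tuple if tnth t0 i then false else false | i < n] = nseq_tuple n false.
    by rewrite (negbTE R_not0).
  by apply: eq_from_tnth => i; rewrite tnth_mktuple tnth_nseq if_same.
suff -> : [tuple if tnth t0 i then false else true | i < n] = map_tuple negb t0.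
  move=> /t0_compl R_closed phi_rest.
  have phi_na : all (atom_sat (negb \o a)) phi.
    apply: all_atom_sat_negb R_closed phi_a _; apply: sub_all phi_rest => b.
    by rewrite (eq_atom_sat _ (g := negb \o a)) // => v; case: (a v).
  by have := phi_v0 phi_na; rewrite /= (phi_v0 phi_a).
by apply: eq_from_tnth => i; rewrite tnth_mktuple tnth_map; case: (tnth t0 i).
Qed.

Lemma ppdef_le1_forcing_one :
  all (@atom_in A _) phi -> ppdef_le1 A (mkrel R) c1.
Proof.
move=> phiA; apply: (ppdef_c1 (phi := forcing_one)).
- rewrite /= eqxx count_uses_remap count_filter (eq_count (a2 := pred0)) ?count_pred0 //.
  by move=> b /=; rewrite andbN.
- rewrite /= mem_head all_map all_filter; apply: sub_all phiA => b b_A.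
  by apply/implyP => _ /=; rewrite atom_in_remap; apply: atom_in_cons.
- case; split=> //; first by exists false; apply: forcing_one_holds10.
  by case=> z sat_z; have := forcing_one_fails0 z; rewrite /holds sat_z.
Qed.

End ForcingOne.

Theorem lemma12 (A : seq brel) (n : nat) (R : {set n.-tuple bool}) :
  ppdef A c0 ->
  R != set0 ->
  ~ zero_valid (mkrel R) ->
  ppdef_le1 A (mkrel R) c1.
Proof.
move=> /ppdef_c0_formula[m [phi [phiA [a phi_a] phi_0]]] R_ne R_nz.
have R_not0 : nseq_tuple n false \notin R by apply/negP => R0; apply: R_nz; right.
have [t0 t0R t0_compl] :
    exists2 t0, t0 \in R & (map_tuple negb t0 \in R -> negb_closed (mkrel R)).
  have [R_closed | /forallPn[t0]] := boolP (negb_closed (mkrel R)).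
    by have /set0Pn[t0 t0R] := R_ne; exists t0.
  by rewrite negb_imply => /andP[t0R /negbTE t0N]; exists t0; rewrite ?t0N.
exact: ppdef_le1_forcing_one phi_0 phi_a t0R R_not0 t0_compl phiA.
Qed.
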